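(* Suppose $\dim_{\mathbb{C}}N=n-m=4$, where $N=\mathrm{span}_{\mathbb{C}}\{I_{m+1},\dots,I_n\}$, and suppose that (1) $a_{m+1}=b_{m+1}=0$, and (2) $a_{m+2}=b_{m+2}=0$ or $a_{m+3}=b_{m+3}=0$. Then for every circle $C$ as described in the context, $\lambda:=\int_C\zeta^{-1}\,d\zeta=2\pi i$ (that is, $2\pi i$ times the unit of $\mathbb{A}_n^m$).
   Context: Fix natural numbers $m\le n$. $\mathbb{A}_n^m$ is a commutative associative algebra with unit over $\mathbb{C}$ with a basis $\{I_k\}_{k=1}^n$ satisfying: (1) for $r,s\in\{1,\dots,m\}$, $I_rI_s=0$ if $r\ne s$ and $I_rI_r=I_r$; (2) for $r,s\in\{m+1,\dots,n\}$, $I_rI_s=\sum_{k=\max\{r,s\}+1}^{n}\Upsilon^{s}_{r,k}I_k$ with constants $\Upsilon^s_{r,k}\in\mathbb{C}$; (3) for each $s\in\{m+1,\dots,n\}$ there is a unique $u_s\in\{1,\dots,m\}$ such that for $r\in\{1,\dots,m\}$, $I_rI_s=I_s$ if $r=u_s$ and $0$ otherwise. Unit $1=\sum_{u=1}^mI_u$; $\mathbb{A}_n^m=S\oplus_sN$ with $S=\mathrm{span}\{I_1,\dots,I_m\}$, $N=\mathrm{span}\{I_{m+1},\dots,I_n\}$. $f_u(\sum_k\lambda_kI_k)=\lambda_u$. Let $e_1=1$, $e_2=\sum_{k=1}^na_kI_k$, $e_3=\sum_{k=1}^nb_kI_k$ ($a_k,b_k\in\mathbb{C}$) be linearly independent over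 $\mathbb{R}$; $\zeta=xe_1+ye_2+ze_3$ ($x,y,z\in\mathbb{R}$), $E_3$ their real span. Standing assumption: $f_u(E_3)=\mathbb{C}$ for all $u=1,\dots,m$. $\zeta$ is non-invertible exactly when $(x,y,z)$ lies on one of the lines $L_u=\{x+y\,\mathrm{Re}\,a_u+z\,\mathrm{Re}\,b_u=0,\ y\,\mathrm{Im}\,a_u+z\,\mathrm{Im}\,b_u=0\}$. The circle: $C\subset E_3$ is $C=\{xe_1+ye_2+ze_3:(x,y,z)\in C'\}$ for a Euclidean circle $C'\subset\mathbb{R}^3$ of radius $R>0$ centered at the origin, such that for every $u$ the image $f_u(C)$ is a positively oriented closed Jordan curve in $\mathbb{C}$ bounding a domain containing $0$. Integral: for a Jordan rectifiable curve $\gamma$ and continuous $\Psi=\sum_k(U_k+iV_k)I_k$ on $\gamma_\zeta$, $\int_{\gamma_\zeta}\Psi d\zeta:=\sum_kI_k\int_\gamma(U_k+iV_k)dx+\sum_ke_2I_k\int_\gamma(U_k+iV_k)dy+\sum_ke_3I_k\int_\gamma(U_k+iV_k)dz$. *)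

From Stdlib Require Import Reals Arith Bool.
From Coquelicot Require Import Coquelicot.

(* Elements of the algebra A_n^m are represented by their coordinate
   vectors w.r.t. the basis I_1..I_n: k |-> coefficient of I_k.
   Only the coordinates k in {1,...,n} are meaningful. *)
Definition Elt := nat -> C.

Fixpoint csum_from (lo len : nat) (f : nat -> C) : C :=
  match len with
  | O => RtoC 0
  | S l => Cplus (f lo) (csum_from (S lo) l f)
  end.
Definition csum (lo hi : nat) (f : nat -> C) : C := csum_from lo (S hi - lo) f.

Definition inrange (lo hi k : nat) : bool := (lo <=? k) && (k <=? hi).

Definition basisI (k : nat) : Elt := fun j => if Nat.eqb j k then RtoC 1 else RtoC 0.

Definition eadd (x y : Elt) : Elt := fun j => Cplus (x j) (y j).
Definition escale (c : C) (x : Elt) : Elt := fun j => Cmult c (x j).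

Definition eqA (n : nat) (x y : Elt) : Prop :=
  forall j, (1 <= j <= n)%nat -> x j = y j.

(* Product of basis elements I_r I_s, r,s in {1..n}, per the multiplication
   table (1)-(3).  Ups r s k stands for the constant Upsilon^s_{r,k};
   us s stands for u_s. *)
Definition mulI (m n : nat) (Ups : nat -> nat -> nat -> C) (us : nat -> nat)
  (r s : nat) : Elt :=
  if (r <=? m) && (s <=? m) then
    (if Nat.eqb r s then basisI r else fun _ => RtoC 0)
  else if (r <=? m) then
    (if Nat.eqb r (us s) then basisI s else fun _ => RtoC 0)
  else if (s <=? m) then
    (if Nat.eqb s (us r) then basisI r else fun _ => RtoC 0)
  else
    (fun k => if inrange (S (Nat.max r s)) n k then Ups r s k else RtoC 0).

Definition emul (m n : nat) Ups us (x y : Elt) : Elt :=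
  fun j => csum 1 n (fun r => csum 1 n (fun s =>
             Cmult (Cmult (x r) (y s)) (mulI m n Ups us r s j))).

Definition is_algebra_Anm (m n : nat) (Ups : nat -> nat -> nat -> C)
  (us : nat -> nat) : Prop :=
  (1 <= m)%nat /\ (m <= n)%nat /\
  (forall s, (m + 1 <= s <= n)%nat -> (1 <= us s <= m)%nat) /\
  (forall r s, (1 <= r <= n)%nat -> (1 <= s <= n)%nat ->
     eqA n (mulI m n Ups us r s) (mulI m n Ups us s r)) /\
  (forall r s t, (1 <= r <= n)%nat -> (1 <= s <= n)%nat -> (1 <= t <= n)%nat ->
     eqA n (emul m n Ups us (emul m n Ups us (basisI r) (basisI s)) (basisI t))
           (emul m n Ups us (basisI r) (emul m n Ups us (basisI s) (basisI t)))).

Definition eone (m : nat) : Elt :=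
  fun j => if inrange 1 m j then RtoC 1 else RtoC 0.

(* zeta = x e_1 + y e_2 + z e_3, with e_1 = 1, e_2 = sum a_k I_k, e_3 = sum b_k I_k *)
Definition zeta (m : nat) (a b : Elt) (x y z : R) : Elt :=
  eadd (escale (RtoC x) (eone m)) (eadd (escale (RtoC y) a) (escale (RtoC z) b)).

Definition CInt (f : R -> C) (lo hi : R) : C :=
  (RInt (fun t => Re (f t)) lo hi, RInt (fun t => Im (f t)) lo hi).

Definition Cderiv (w : R -> C) (t : R) : C :=
  (Derive (fun s => Re (w s)) t, Derive (fun s => Im (w s)) t).

Definition winding0 (w : R -> C) : C :=
  Cdiv (CInt (fun t => Cdiv (Cderiv w t) (w t)) 0 (2 * PI))
       (Cmult (RtoC (2 * PI)) Ci).

(* the Euclidean circle of radius rad centred at 0 in R^3, in the plane spanned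
   by the orthonormal vectors (u1,u2,u3), (v1,v2,v3), oriented from u to v *)
Definition circ (rad c1 c2 t : R) : R := rad * (cos t * c1 + sin t * c2).

Definition orthonormal (u1 u2 u3 v1 v2 v3 : R) : Prop :=
  u1 * u1 + u2 * u2 + u3 * u3 = 1 /\ v1 * v1 + v2 * v2 + v3 * v3 = 1 /\
  u1 * v1 + u2 * v2 + u3 * v3 = 0.

(* The integral  int_{gamma_zeta} Psi dzeta  along the curve
   t |-> (gx t, gy t, gz t), t in [0, 2 pi], as in the definition:
   sum_k I_k int Psi_k dx + sum_k e2 I_k int Psi_k dy + sum_k e3 I_k int Psi_k dz,
   where int_gamma g dx = int_0^{2pi} g(gamma t) gx'(t) dt.
   Psi t is the value of Psi at the point zeta(gamma t). *)
Definition lineint (m n : nat) Ups us (a b : Elt) (gx gy gz : R -> R)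
  (Psi : R -> Elt) : Elt :=
  fun j => csum 1 n (fun k =>
    Cplus (Cmult (CInt (fun t => Cmult (Psi t k) (RtoC (Derive gx t))) 0 (2 * PI))
                 (basisI k j))
    (Cplus (Cmult (CInt (fun t => Cmult (Psi t k) (RtoC (Derive gy t))) 0 (2 * PI))
                  (emul m n Ups us a (basisI k) j))
           (Cmult (CInt (fun t => Cmult (Psi t k) (RtoC (Derive gz t))) 0 (2 * PI))
                  (emul m n Ups us b (basisI k) j)))).

From Stdlib Require Import Reals Arith Lia Lra List.
From Coquelicot Require Import Coquelicot.

(* Along C the semisimple coordinates f_u(zeta(t)) do not vanish, so zeta(t) is invertible: the
   product is triangular with respect to the basis, and the coordinates of the inverse are solved for
   one after the other.  The line integral is then the integral over [0, 2 pi] of zeta'(t) zeta(t)^-1.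
   On a semisimple coordinate u the integrand is f_u'/f_u, whose integral is 2 pi i times the winding
   number 1.  On the nilpotent coordinates the integrand is the derivative of the corresponding
   coordinate of log (1 + w), w = zeta_S^-1 zeta_N, which is periodic in t, so these integrals vanish.
   Hypotheses (1) and (2) keep log (1 + w) a short explicit expression, and associativity, which
   forces u_k = u_r whenever Upsilon^s_(r,k) <> 0, makes its derivative match the integrand. *)

Lemma csum_from_ext lo len f g :
  (forall k, (lo <= k < lo + len)%nat -> f k = g k) ->
  csum_from lo len f = csum_from lo len g.
Proof.
  revert lo; induction len as [|len IH]; intros lo H; simpl; auto.
  rewrite H by lia. f_equal. apply IH. intros; apply H; lia.
Qed.

Lemma csum_from_zero lo len : csum_from lo len (fun _ => RtoC 0) = RtoC 0.
Proof. revert lo; induction len as [|len IH]; intros; simpl; auto. rewrite IH. ring. Qed.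

Lemma csum_from_plus lo len f g :
  csum_from lo len (fun k => Cplus (f k) (g k)) =
  Cplus (csum_from lo len f) (csum_from lo len g).
Proof. revert lo; induction len as [|len IH]; intros; simpl. ring. rewrite IH. ring. Qed.

Lemma csum_from_scal lo len c f :
  csum_from lo len (fun k => Cmult c (f k)) = Cmult c (csum_from lo len f).
Proof. revert lo; induction len as [|len IH]; intros; simpl. ring. rewrite IH. ring. Qed.

Lemma csum_from_delta lo len i f :
  (lo <= i < lo + len)%nat ->
  csum_from lo len (fun k => if Nat.eqb k i then f k else RtoC 0) = f i.
Proof.
  revert lo; induction len as [|len IH]; intros lo H; simpl. lia.
  destruct (Nat.eqb_spec lo i).
  - subst. rewrite (csum_from_ext _ _ _ (fun _ => RtoC 0)), csum_from_zero. ring.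
    intros k Hk. destruct (Nat.eqb_spec k i); auto; lia.
  - rewrite IH by lia. ring.
Qed.

Lemma csum_from_app lo len1 len2 f :
  csum_from lo (len1 + len2) f = Cplus (csum_from lo len1 f) (csum_from (lo + len1) len2 f).
Proof.
  revert lo; induction len1 as [|len1 IH]; intros; simpl.
  - rewrite Nat.add_0_r. ring.
  - rewrite IH. replace (S lo + len1)%nat with (lo + S len1)%nat by lia. ring.
Qed.

Lemma csum_ext lo hi f g :
  (forall k, (lo <= k <= hi)%nat -> f k = g k) -> csum lo hi f = csum lo hi g.
Proof. intros H; apply csum_from_ext; intros; apply H; lia. Qed.

Lemma csum_zero lo hi : csum lo hi (fun _ => RtoC 0) = RtoC 0.
Proof. apply csum_from_zero. Qed.

Lemma csum_eq0 lo hi f :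
  (forall k, (lo <= k <= hi)%nat -> f k = RtoC 0) -> csum lo hi f = RtoC 0.
Proof. intros H. rewrite (csum_ext _ _ _ _ H). apply csum_zero. Qed.

Lemma csum_plus lo hi f g :
  csum lo hi (fun k => Cplus (f k) (g k)) = Cplus (csum lo hi f) (csum lo hi g).
Proof. apply csum_from_plus. Qed.

Lemma csum_scal lo hi c f :
  csum lo hi (fun k => Cmult c (f k)) = Cmult c (csum lo hi f).
Proof. apply csum_from_scal. Qed.

Lemma csum_delta lo hi i f :
  (lo <= i <= hi)%nat ->
  csum lo hi (fun k => if Nat.eqb k i then f k else RtoC 0) = f i.
Proof. intros; apply csum_from_delta; lia. Qed.

Lemma csum_swap lo1 hi1 lo2 hi2 (g : nat -> nat -> C) :
  csum lo1 hi1 (fun r => csum lo2 hi2 (fun s => g r s)) =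
  csum lo2 hi2 (fun s => csum lo1 hi1 (fun r => g r s)).
Proof.
  unfold csum. generalize (S hi1 - lo1)%nat as len. intros len. revert lo1.
  induction len as [|len IH]; intros lo; simpl.
  - now rewrite csum_from_zero.
  - now rewrite IH, csum_from_plus.
Qed.

Lemma csum_split_last4 m f : (1 <= m)%nat ->
  csum 1 (m + 4) f = Cplus (csum 1 m f)
    (Cplus (f (m + 1)%nat) (Cplus (f (m + 2)%nat) (Cplus (f (m + 3)%nat) (f (m + 4)%nat)))).
Proof.
  intros Hm. unfold csum.
  replace (S (m + 4) - 1)%nat with (m + 4)%nat by lia.
  replace (S m - 1)%nat with m by lia.
  rewrite csum_from_app. simpl.
  replace (S m) with (m + 1)%nat by lia. replace (S (m + 1)) with (m + 2)%nat by lia.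
  replace (S (m + 2)) with (m + 3)%nat by lia. replace (S (m + 3)) with (m + 4)%nat by lia.
  ring.
Qed.

Definition ccont (f : R -> C) (t : R) :=
  continuous (fun s => fst (f s)) t /\ continuous (fun s => snd (f s)) t.

Definition is_cderive (f : R -> C) (t : R) (d : C) :=
  is_derive (fun s => fst (f s)) t (fst d) /\ is_derive (fun s => snd (f s)) t (snd d).

Definition is_CInt (f : R -> C) (l : C) :=
  is_RInt (fun s => fst (f s)) 0 (2 * PI) (fst l) /\
  is_RInt (fun s => snd (f s)) 0 (2 * PI) (snd l).

Lemma C_norm2_neq0 (z : C) : z <> RtoC 0 -> fst z ^ 2 + snd z ^ 2 <> 0.
Proof.
  intros H E. apply H. destruct z as [p q]; simpl in *.
  assert (p = 0) by nra. assert (q = 0) by nra. subst. reflexivity.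
Qed.

Lemma continuous_sqr (h : R -> R) t : continuous h t -> continuous (fun s => h s ^ 2) t.
Proof. intros H. exact (continuous_mult _ _ _ H (continuous_mult _ _ _ H (continuous_const 1 t))). Qed.

Lemma ccont_const c t : ccont (fun _ => c) t.
Proof. split; apply continuous_const. Qed.

Lemma ccont_RtoC g t : continuous g t -> ccont (fun s => RtoC (g s)) t.
Proof. intros H; split; simpl; [exact H | apply continuous_const]. Qed.

Lemma ccont_plus f g t : ccont f t -> ccont g t -> ccont (fun s => Cplus (f s) (g s)) t.
Proof.
  intros [H1 H2] [H3 H4]; split; simpl.
  - exact (continuous_plus _ _ _ H1 H3).
  - exact (continuous_plus _ _ _ H2 H4).
Qed.

Lemma ccont_opp f t : ccont f t -> ccont (fun s => Copp (f s)) t.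
Proof. intros [H1 H2]; split; simpl; [exact (continuous_opp _ _ H1) | exact (continuous_opp _ _ H2)]. Qed.

Lemma ccont_mult f g t : ccont f t -> ccont g t -> ccont (fun s => Cmult (f s) (g s)) t.
Proof.
  intros [H1 H2] [H3 H4]; split; simpl.
  - exact (continuous_minus _ _ _ (continuous_mult _ _ _ H1 H3) (continuous_mult _ _ _ H2 H4)).
  - exact (continuous_plus _ _ _ (continuous_mult _ _ _ H1 H4) (continuous_mult _ _ _ H2 H3)).
Qed.

Lemma ccont_inv f t : ccont f t -> f t <> RtoC 0 -> ccont (fun s => Cinv (f s)) t.
Proof.
  intros [H1 H2] Hnz. pose proof (C_norm2_neq0 _ Hnz) as Hn.
  assert (Hd : continuous (fun s => fst (f s) ^ 2 + snd (f s) ^ 2) t)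
    by exact (continuous_plus _ _ _ (continuous_sqr _ _ H1) (continuous_sqr _ _ H2)).
  split; simpl.
  - exact (continuous_mult _ _ _ H1 (continuous_Rinv_comp _ _ Hd Hn)).
  - exact (continuous_mult _ _ _ (continuous_opp _ _ H2) (continuous_Rinv_comp _ _ Hd Hn)).
Qed.

Lemma ccont_div f g t : ccont f t -> ccont g t -> g t <> RtoC 0 ->
  ccont (fun s => Cdiv (f s) (g s)) t.
Proof. intros. apply ccont_mult; auto. now apply ccont_inv. Qed.

Lemma ccont_csum lo hi (f : nat -> R -> C) t :
  (forall k, (lo <= k <= hi)%nat -> ccont (f k) t) ->
  ccont (fun s => csum lo hi (fun k => f k s)) t.
Proof.
  intros Hf. unfold csum.
  assert (Hf' : forall k, (lo <= k < lo + (S hi - lo))%nat -> ccont (f k) t)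
    by (intros; apply Hf; lia).
  clear Hf. revert Hf'. generalize (S hi - lo)%nat as len. intros len. revert lo.
  induction len as [|len IH]; intros lo Hf; simpl.
  - apply ccont_const.
  - apply ccont_plus; [apply Hf; lia | apply IH; intros; apply Hf; lia].
Qed.

Lemma is_derive_val (f : R -> R) (x l l' : R) : is_derive f x l -> l = l' -> is_derive f x l'.
Proof. now intros H ->. Qed.

Lemma is_derive_sqr h t dh : is_derive h t dh -> is_derive (fun s => h s ^ 2) t (2 * h t * dh).
Proof.
  intros H. eapply is_derive_val.
  - exact (is_derive_mult _ _ _ _ _ H
             (is_derive_mult _ _ _ _ _ H (is_derive_const 1 t) Rmult_comm) Rmult_comm).
  - simpl. unfold plus, mult, zero; simpl. ring.
Qed.

Lemma is_cderive_val f t d d' : is_cderive f t d -> d = d' -> is_cderive f t d'.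
Proof. now intros H ->. Qed.

Lemma is_cderive_ccont f t d : is_cderive f t d -> ccont f t.
Proof.
  intros [H1 H2]; split.
  - exact (ex_derive_continuous (K := R_AbsRing) (V := R_NormedModule) _ _ (ex_intro _ _ H1)).
  - exact (ex_derive_continuous (K := R_AbsRing) (V := R_NormedModule) _ _ (ex_intro _ _ H2)).
Qed.

Lemma is_cderive_const c t : is_cderive (fun _ => c) t (RtoC 0).
Proof. split; simpl; exact (is_derive_const (K := R_AbsRing) (V := R_NormedModule) _ t). Qed.

Lemma is_cderive_RtoC g t dg : is_derive g t dg -> is_cderive (fun s => RtoC (g s)) t (RtoC dg).
Proof.
  intros H; split; simpl; [exact H | exact (is_derive_const (K := R_AbsRing) (V := R_NormedModule) _ t)].
Qed.

Lemma is_cderive_plus f g t df dg : is_cderive f t df -> is_cderive g t dg ->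
  is_cderive (fun s => Cplus (f s) (g s)) t (Cplus df dg).
Proof.
  intros [H1 H2] [H3 H4]; split; simpl.
  - exact (is_derive_plus _ _ _ _ _ H1 H3).
  - exact (is_derive_plus _ _ _ _ _ H2 H4).
Qed.

Lemma is_cderive_opp f t df : is_cderive f t df -> is_cderive (fun s => Copp (f s)) t (Copp df).
Proof. intros [H1 H2]; split; simpl; [exact (is_derive_opp _ _ _ H1) | exact (is_derive_opp _ _ _ H2)]. Qed.

Lemma is_cderive_mult f g t df dg : is_cderive f t df -> is_cderive g t dg ->
  is_cderive (fun s => Cmult (f s) (g s)) t (Cplus (Cmult df (g t)) (Cmult (f t) dg)).
Proof.
  intros [H1 H2] [H3 H4]; split; simpl.
  - eapply is_derive_val.
    + exact (is_derive_minus _ _ _ _ _ (is_derive_mult _ _ _ _ _ H1 H3 Rmult_comm)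
                                      (is_derive_mult _ _ _ _ _ H2 H4 Rmult_comm)).
    + simpl. unfold minus, plus, opp, mult; simpl. ring.
  - eapply is_derive_val.
    + exact (is_derive_plus _ _ _ _ _ (is_derive_mult _ _ _ _ _ H1 H4 Rmult_comm)
                                     (is_derive_mult _ _ _ _ _ H2 H3 Rmult_comm)).
    + simpl. unfold minus, plus, opp, mult; simpl. ring.
Qed.

Lemma is_cderive_inv f t df : is_cderive f t df -> f t <> RtoC 0 ->
  is_cderive (fun s => Cinv (f s)) t (Copp (Cmult df (Cinv (Cmult (f t) (f t))))).
Proof.
  intros [H1 H2] Hnz. pose proof (C_norm2_neq0 _ Hnz) as Hn.
  assert (Hd : is_derive (fun s => fst (f s) ^ 2 + snd (f s) ^ 2) t
                 (2 * fst (f t) * fst df + 2 * snd (f t) * snd df))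
    by exact (is_derive_plus _ _ _ _ _ (is_derive_sqr _ _ _ H1) (is_derive_sqr _ _ _ H2)).
  split; simpl.
  - eapply is_derive_val; [exact (is_derive_div _ _ _ _ _ H1 Hd Hn)|].
    cbv beta. set (p := fst (f t)) in *. set (q := snd (f t)) in *. clearbody p q.
    field. split; [intro E; apply Hn; nra | intro E; apply Hn; nra].
  - eapply is_derive_val; [exact (is_derive_div _ _ _ _ _ (is_derive_opp _ _ _ H2) Hd Hn)|].
    unfold opp; simpl; cbv beta. set (p := fst (f t)) in *. set (q := snd (f t)) in *. clearbody p q.
    field. split; [intro E; apply Hn; nra | intro E; apply Hn; nra].
Qed.

Lemma is_cderive_div f g t df dg : is_cderive f t df -> is_cderive g t dg -> g t <> RtoC 0 ->
  is_cderive (fun s => Cdiv (f s) (g s)) t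
    (Cplus (Cmult df (Cinv (g t))) (Cmult (f t) (Copp (Cmult dg (Cinv (Cmult (g t) (g t))))))).
Proof. intros H1 H2 Hg. unfold Cdiv. apply is_cderive_mult; auto. now apply is_cderive_inv. Qed.

Lemma Cderiv_is_cderive f t d : is_cderive f t d -> Cderiv f t = d.
Proof.
  intros [H1 H2]. unfold Cderiv, Re, Im.
  replace (Derive (fun s => fst (f s)) t) with (fst d) by (symmetry; now apply is_derive_unique).
  replace (Derive (fun s => snd (f s)) t) with (snd d) by (symmetry; now apply is_derive_unique).
  now destruct d.
Qed.

Lemma Rmin_0_2PI : Rmin 0 (2 * PI) = 0.
Proof. apply Rmin_left. pose proof PI_RGT_0. lra. Qed.

Lemma Rmax_0_2PI : Rmax 0 (2 * PI) = 2 * PI.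
Proof. apply Rmax_right. pose proof PI_RGT_0. lra. Qed.

Lemma is_RInt_val (f : R -> R) a b (l l' : R) : is_RInt f a b l -> l = l' -> is_RInt f a b l'.
Proof. now intros H ->. Qed.

Lemma is_CInt_zero : is_CInt (fun _ => RtoC 0) (RtoC 0).
Proof.
  split; simpl; eapply is_RInt_val; try apply (is_RInt_const (V := R_NormedModule));
    unfold scal; simpl; unfold mult; simpl; ring.
Qed.

Lemma is_CInt_plus f g l1 l2 : is_CInt f l1 -> is_CInt g l2 ->
  is_CInt (fun s => Cplus (f s) (g s)) (Cplus l1 l2).
Proof.
  intros [H1 H2] [H3 H4]; split; simpl.
  - exact (is_RInt_plus _ _ _ _ _ _ H1 H3).
  - exact (is_RInt_plus _ _ _ _ _ _ H2 H4).
Qed.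

Lemma is_CInt_mult_l c f l : is_CInt f l -> is_CInt (fun s => Cmult c (f s)) (Cmult c l).
Proof.
  intros [H1 H2]; split; simpl.
  - exact (is_RInt_minus _ _ _ _ _ _ (is_RInt_scal _ _ _ (fst c) _ H1)
                                     (is_RInt_scal _ _ _ (snd c) _ H2)).
  - exact (is_RInt_plus _ _ _ _ _ _ (is_RInt_scal _ _ _ (fst c) _ H2)
                                    (is_RInt_scal _ _ _ (snd c) _ H1)).
Qed.

Lemma is_CInt_mult_r c f l : is_CInt f l -> is_CInt (fun s => Cmult (f s) c) (Cmult l c).
Proof.
  intros H. destruct (is_CInt_mult_l c f l H) as [H1 H2]. split.
  - eapply is_RInt_ext; [|eapply is_RInt_val; [exact H1|]]; intros; simpl; ring.
  - eapply is_RInt_ext; [|eapply is_RInt_val; [exact H2|]]; intros; simpl; ring.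
Qed.

Lemma is_CInt_csum lo hi (f : nat -> R -> C) (l : nat -> C) :
  (forall k, (lo <= k <= hi)%nat -> is_CInt (f k) (l k)) ->
  is_CInt (fun s => csum lo hi (fun k => f k s)) (csum lo hi l).
Proof.
  intros Hf. unfold csum.
  assert (Hf' : forall k, (lo <= k < lo + (S hi - lo))%nat -> is_CInt (f k) (l k))
    by (intros; apply Hf; lia).
  clear Hf. revert Hf'. generalize (S hi - lo)%nat as len. intros len. revert lo.
  induction len as [|len IH]; intros lo Hf; simpl.
  - apply is_CInt_zero.
  - apply is_CInt_plus; [apply Hf; lia | apply IH; intros; apply Hf; lia].
Qed.

Lemma is_CInt_ext f g l : (forall t, 0 < t < 2 * PI -> f t = g t) -> is_CInt f l -> is_CInt g l.
Proof.
  intros He [H1 H2]; split; eapply is_RInt_ext; try eassumption;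
    rewrite Rmin_0_2PI, Rmax_0_2PI; intros x Hx; now rewrite He.
Qed.

Lemma is_CInt_CInt f : (forall t, 0 <= t <= 2 * PI -> ccont f t) -> is_CInt f (CInt f 0 (2 * PI)).
Proof.
  intros H. split; simpl; apply (RInt_correct (V := R_CompleteNormedModule));
    apply ex_RInt_continuous; rewrite Rmin_0_2PI, Rmax_0_2PI; intros z Hz; apply H; auto.
Qed.

Lemma is_CInt_unique f l : is_CInt f l -> CInt f 0 (2 * PI) = l.
Proof.
  intros [H1 H2]. unfold CInt, Re, Im. destruct l as [l1 l2]. simpl in *.
  now rewrite (is_RInt_unique _ _ _ _ H1), (is_RInt_unique _ _ _ _ H2).
Qed.

Lemma CInt_ext f g : (forall t, 0 < t < 2 * PI -> f t = g t) ->
  CInt f 0 (2 * PI) = CInt g 0 (2 * PI).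
Proof.
  intros He. unfold CInt. f_equal; apply RInt_ext; rewrite Rmin_0_2PI, Rmax_0_2PI;
    intros x Hx; now rewrite He.
Qed.

Lemma CInt_derive_periodic F f :
  (forall t, 0 <= t <= 2 * PI -> is_cderive F t (f t)) ->
  (forall t, 0 <= t <= 2 * PI -> ccont f t) -> F (2 * PI) = F 0 ->
  CInt f 0 (2 * PI) = RtoC 0.
Proof.
  intros Hd Hc Hper. apply is_CInt_unique.
  replace (RtoC 0) with (Cminus (F (2 * PI)) (F 0)) by (rewrite Hper; ring).
  split; simpl.
  - eapply is_RInt_val.
    + apply (is_RInt_derive (V := R_CompleteNormedModule) (fun s => fst (F s)) (fun s => fst (f s)));
        rewrite Rmin_0_2PI, Rmax_0_2PI; intros x Hx; [apply (Hd x Hx) | apply (Hc x Hx)].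
    + unfold minus, plus, opp; simpl; ring.
  - eapply is_RInt_val.
    + apply (is_RInt_derive (V := R_CompleteNormedModule) (fun s => snd (F s)) (fun s => snd (f s)));
        rewrite Rmin_0_2PI, Rmax_0_2PI; intros x Hx; [apply (Hd x Hx) | apply (Hc x Hx)].
    + unfold minus, plus, opp; simpl; ring.
Qed.

Ltac case_nat := repeat match goal with
  | |- context [Nat.leb ?a ?b] => destruct (Nat.leb_spec a b)
  | |- context [Nat.eqb ?a ?b] => destruct (Nat.eqb_spec a b)
  | |- context [Nat.ltb ?a ?b] => destruct (Nat.ltb_spec a b)
  end.

Lemma eone_ss m j : (1 <= j <= m)%nat -> eone m j = RtoC 1.
Proof. intros Hj. unfold eone, inrange. case_nat; simpl; lia || reflexivity. Qed.

Lemma eone_nil m j : (m < j)%nat -> eone m j = RtoC 0.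
Proof. intros Hj. unfold eone, inrange. case_nat; simpl; lia || reflexivity. Qed.

Lemma C_solve_linear (c y X : C) : c <> RtoC 0 -> Cplus (Cmult c y) X = RtoC 0 ->
  y = Copp (Cdiv X c).
Proof.
  intros Hc H. replace X with (Cminus (Cplus (Cmult c y) X) (Cmult c y)) by ring.
  rewrite H. field. exact Hc.
Qed.

Lemma Cdiv_eq_1 (X Y : C) : Y <> RtoC 0 -> Cdiv X Y = RtoC 1 -> X = Y.
Proof. intros HY H. replace X with (Cmult (Cdiv X Y) Y) by (field; exact HY). rewrite H. ring. Qed.

Lemma Ceq0_dec (z : C) : {z = RtoC 0} + {z <> RtoC 0}.
Proof.
  destruct z as [x y]. destruct (Req_EM_T x 0), (Req_EM_T y 0); subst; [now left|..];
    right; intro E; injection E; intros; contradiction.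
Qed.

Lemma basisI_same k : basisI k k = RtoC 1.
Proof. unfold basisI. now rewrite Nat.eqb_refl. Qed.

Lemma basisI_other k j : j <> k -> basisI k j = RtoC 0.
Proof. intros H. unfold basisI. now rewrite (proj2 (Nat.eqb_neq j k) H). Qed.

Definition C1_fun (g : R -> R) := forall t, ex_derive g t /\ continuous (Derive g) t.

Ltac eval_ltb := repeat match goal with
  | |- context [Nat.ltb ?a ?b] => first
      [ replace (Nat.ltb a b) with true by (symmetry; apply Nat.ltb_lt; lia)
      | replace (Nat.ltb a b) with false by (symmetry; apply Nat.ltb_ge; lia) ]
  end.

Section Algebra.
Variables (m n : nat) (Ups : nat -> nat -> nat -> C) (us : nat -> nat).

Definition NNpart (x y : Elt) (j : nat) : C :=
  csum 1 n (fun r => csum 1 n (fun s =>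
    if ((m <? r) && (r <? j) && (m <? s) && (s <? j))%bool
    then Cmult (Cmult (x r) (y s)) (Ups r s j) else RtoC 0)).

Lemma mulI_coord_ss r s j : (j <= m)%nat ->
  mulI m n Ups us r s j = if (Nat.eqb r j && Nat.eqb s j)%bool then RtoC 1 else RtoC 0.
Proof.
  intros Hj. unfold mulI, basisI, inrange.
  do 4 (cbv beta iota delta [andb]; case_nat; try subst); simpl; try lia; reflexivity.
Qed.

Lemma mulI_coord_nil r s j : (m < j <= n)%nat -> (1 <= us j <= m)%nat ->
  mulI m n Ups us r s j =
  Cplus (Cplus (if (Nat.eqb r (us j) && Nat.eqb s j)%bool then RtoC 1 else RtoC 0)
               (if (Nat.eqb r j && Nat.eqb s (us j))%bool then RtoC 1 else RtoC 0))
        (if ((m <? r) && (r <? j) && (m <? s) && (s <? j))%bool then Ups r s j else RtoC 0).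
Proof.
  intros Hj Hu. unfold mulI, basisI, inrange.
  do 4 (cbv beta iota delta [andb]; case_nat; try subst); simpl; try lia; ring.
Qed.

Hypothesis Hmn : (m <= n)%nat.
Hypothesis Hus : forall j, (m < j <= n)%nat -> (1 <= us j <= m)%nat.

Lemma emul_coord_ss x y j : (1 <= j <= m)%nat ->
  emul m n Ups us x y j = Cmult (x j) (y j).
Proof.
  intros Hj. unfold emul.
  rewrite (csum_ext _ _ _ (fun r => if Nat.eqb r j then Cmult (x r) (y j) else RtoC 0)).
  - apply csum_delta. lia.
  - intros r Hr.
    rewrite (csum_ext _ _ _ (fun s => if Nat.eqb s j then
               (if Nat.eqb r j then Cmult (x r) (y s) else RtoC 0) else RtoC 0)).
    + rewrite csum_delta by lia. reflexivity.
    + intros s Hs. rewrite mulI_coord_ss by lia.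
      destruct (Nat.eqb r j), (Nat.eqb s j); simpl; ring.
Qed.

Lemma emul_coord_nil x y j : (m < j <= n)%nat ->
  emul m n Ups us x y j =
  Cplus (Cplus (Cmult (x (us j)) (y j)) (Cmult (x j) (y (us j)))) (NNpart x y j).
Proof.
  intros Hj. pose proof (Hus j Hj). unfold emul, NNpart.
  rewrite (csum_ext _ _ _ (fun r =>
    Cplus (Cplus (if Nat.eqb r (us j) then Cmult (x r) (y j) else RtoC 0)
                 (if Nat.eqb r j then Cmult (x r) (y (us j)) else RtoC 0))
     (csum 1 n (fun s =>
        if ((m <? r) && (r <? j) && (m <? s) && (s <? j))%bool
        then Cmult (Cmult (x r) (y s)) (Ups r s j) else RtoC 0)))).
  - rewrite !csum_plus, !csum_delta by lia. reflexivity.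
  - intros r Hr.
    rewrite (csum_ext _ _ _ (fun s =>
      Cplus (Cplus (if Nat.eqb s j then (if Nat.eqb r (us j) then Cmult (x r) (y s) else RtoC 0)
                    else RtoC 0)
                   (if Nat.eqb s (us j) then (if Nat.eqb r j then Cmult (x r) (y s) else RtoC 0)
                    else RtoC 0))
        (if ((m <? r) && (r <? j) && (m <? s) && (s <? j))%bool
         then Cmult (Cmult (x r) (y s)) (Ups r s j) else RtoC 0))).
    + rewrite !csum_plus, !csum_delta by lia.
      destruct (Nat.eqb r (us j)), (Nat.eqb r j); reflexivity.
    + intros s Hs. rewrite mulI_coord_nil by lia.
      destruct (Nat.eqb r (us j)), (Nat.eqb s j), (Nat.eqb r j), (Nat.eqb s (us j)),
        ((m <? r) && (r <? j) && (m <? s) && (s <? j))%bool; simpl; ring.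
Qed.

Lemma NNpart_ext x y y' j : (forall i, (m < i < j)%nat -> y i = y' i) ->
  NNpart x y j = NNpart x y' j.
Proof.
  intros Hy. unfold NNpart. apply csum_ext; intros r _. apply csum_ext; intros s _.
  case_nat; simpl; try reflexivity. now rewrite Hy by lia.
Qed.

Lemma NNpart_vanish_l x y j : (forall i, (m < i < j)%nat -> x i = RtoC 0) ->
  NNpart x y j = RtoC 0.
Proof.
  intros Hx. apply csum_eq0; intros r _. apply csum_eq0; intros s _.
  case_nat; simpl; try reflexivity. rewrite Hx by lia. ring.
Qed.

Lemma emul_coord_lower x y y' j : (1 <= j <= n)%nat ->
  (forall i, (1 <= i <= j)%nat -> y i = y' i) ->
  emul m n Ups us x y j = emul m n Ups us x y' j.
Proof.
  intros Hj Hy. destruct (Nat.le_gt_cases j m).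
  - rewrite !emul_coord_ss by lia. now rewrite Hy by lia.
  - pose proof (Hus j ltac:(lia)). rewrite !emul_coord_nil by lia.
    rewrite (Hy j), (Hy (us j)) by lia. f_equal. apply NNpart_ext. intros; apply Hy; lia.
Qed.

Lemma emul_eadd_l x x' y j :
  emul m n Ups us (eadd x x') y j = Cplus (emul m n Ups us x y j) (emul m n Ups us x' y j).
Proof.
  unfold emul. rewrite <- csum_plus. apply csum_ext; intros.
  rewrite <- csum_plus. apply csum_ext; intros. unfold eadd. ring.
Qed.

Lemma emul_escale_l c x y j :
  emul m n Ups us (escale c x) y j = Cmult c (emul m n Ups us x y j).
Proof.
  unfold emul. rewrite <- csum_scal. apply csum_ext; intros.
  rewrite <- csum_scal. apply csum_ext; intros. unfold escale. ring.
Qed.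

Lemma emul_eone_l y j : (1 <= j <= n)%nat -> emul m n Ups us (eone m) y j = y j.
Proof.
  intros Hj. destruct (Nat.le_gt_cases j m).
  - rewrite emul_coord_ss, eone_ss by lia. ring.
  - pose proof (Hus j ltac:(lia)).
    rewrite emul_coord_nil, NNpart_vanish_l, eone_ss, eone_nil
      by (lia || (intros; apply eone_nil; lia)).
    ring.
Qed.

Lemma emul_zeta_l a b x0 y0 z0 w j : (1 <= j <= n)%nat ->
  emul m n Ups us (zeta m a b x0 y0 z0) w j =
  Cplus (Cmult (RtoC x0) (w j))
    (Cplus (Cmult (RtoC y0) (emul m n Ups us a w j)) (Cmult (RtoC z0) (emul m n Ups us b w j))).
Proof.
  intros Hj. unfold zeta. rewrite !emul_eadd_l, !emul_escale_l, emul_eone_l by lia.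
  reflexivity.
Qed.

Lemma emul_expand_r x y j :
  emul m n Ups us x y j = csum 1 n (fun k => Cmult (y k) (emul m n Ups us x (basisI k) j)).
Proof.
  unfold emul. rewrite csum_swap. apply csum_ext; intros k Hk.
  rewrite <- csum_scal. apply csum_ext; intros r Hr.
  rewrite (csum_ext _ _ _ (fun s => if Nat.eqb s k
             then Cmult (Cmult (x r) (basisI k s)) (mulI m n Ups us r s j) else RtoC 0)).
  - rewrite csum_delta by lia. unfold basisI. rewrite Nat.eqb_refl. ring.
  - intros s Hs. unfold basisI. destruct (Nat.eqb_spec s k); [reflexivity | ring].
Qed.


Lemma NNpart_basis r s k : (m < r < k)%nat -> (m < s < k)%nat -> (r <= n)%nat -> (s <= n)%nat ->
  NNpart (basisI r) (basisI s) k = Ups r s k.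
Proof.
  intros Hr Hs Hrn Hsn. unfold NNpart.
  rewrite (csum_ext _ _ _ (fun r' => if Nat.eqb r' r then Ups r s k else RtoC 0)).
  - apply (csum_delta _ _ _ (fun _ => Ups r s k)). lia.
  - intros r' Hr'.
    rewrite (csum_ext _ _ _ (fun s' => if Nat.eqb s' s then
               (if Nat.eqb r' r then Ups r s k else RtoC 0) else RtoC 0)).
    + apply (csum_delta _ _ _ (fun _ => if Nat.eqb r' r then Ups r s k else RtoC 0)). lia.
    + intros s' Hs'. unfold basisI. case_nat; subst; simpl; try lia; ring.
Qed.

(* Coordinate k of (I_(u_k) I_r) I_s vanishes unless u_k = u_r, while that of
   I_(u_k) (I_r I_s) is Upsilon_(r,s,k). *)
Lemma Ups_neq0_us (Hassoc : forall r s t, (1 <= r <= n)%nat -> (1 <= s <= n)%nat -> (1 <= t <= n)%nat ->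
     eqA n (emul m n Ups us (emul m n Ups us (basisI r) (basisI s)) (basisI t))
           (emul m n Ups us (basisI r) (emul m n Ups us (basisI s) (basisI t))))
  r s k : (m < r < k)%nat -> (m < s < k)%nat -> (k <= n)%nat ->
  Ups r s k <> RtoC 0 -> us k = us r.
Proof.
  intros Hr Hs Hk HUps. pose proof (Hus k ltac:(lia)) as Huk.
  destruct (Nat.eq_dec (us k) (us r)) as [|Hne]; [assumption | exfalso; apply HUps].
  assert (Hleft : forall i, (m < i < k)%nat ->
            emul m n Ups us (basisI (us k)) (basisI r) i = RtoC 0).
  { intros i Hi. pose proof (Hus i ltac:(lia)).
    rewrite emul_coord_nil, NNpart_vanish_l by (lia || (intros; apply basisI_other; lia)).
    rewrite (basisI_other (us k) i) by lia. unfold basisI. case_nat; subst; try lia; ring. }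
  specialize (Hassoc (us k) r s ltac:(lia) ltac:(lia) ltac:(lia) k ltac:(lia)).
  set (Irs := emul m n Ups us (basisI r) (basisI s)) in Hassoc.
  rewrite emul_coord_nil, NNpart_vanish_l in Hassoc by (lia || (intros; apply Hleft; lia)).
  rewrite (emul_coord_nil _ Irs), NNpart_vanish_l in Hassoc
    by (lia || (intros; apply basisI_other; lia)).
  unfold Irs in Hassoc. rewrite (emul_coord_nil (basisI r) _ k), NNpart_basis in Hassoc by lia.
  rewrite basisI_same, !basisI_other in Hassoc by lia.
  ring_simplify in Hassoc. now symmetry.
Qed.

Definition einv_ss (Z : Elt) : Elt := fun i => if Nat.leb i m then Cinv (Z i) else RtoC 0.

(* Coordinate j of the inverse is obtained by solving coordinate j of [Z psi = 1] for [psi j]. *)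
Definition einv_step (Z psi : Elt) (j : nat) : Elt := fun i =>
  if Nat.eqb i j
  then Copp (Cdiv (Cplus (Cmult (Z j) (psi (us j))) (NNpart Z psi j)) (Z (us j)))
  else psi i.

Definition einv (Z : Elt) : Elt := fold_left (einv_step Z) (seq (S m) (n - m)) (einv_ss Z).

Lemma einv_step_other Z psi j i : i <> j -> einv_step Z psi j i = psi i.
Proof. intros H. unfold einv_step. now rewrite (proj2 (Nat.eqb_neq i j) H). Qed.

Section Inverse.
Variable Z : Elt.
Hypothesis HZ : forall u, (1 <= u <= m)%nat -> Z u <> RtoC 0.

Lemma inv_coord_ss psi u : (1 <= u <= m)%nat -> eqA n (emul m n Ups us Z psi) (eone m) ->
  psi u = Cinv (Z u).
Proof.
  intros Hu Hpsi. specialize (Hpsi u ltac:(lia)).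
  rewrite emul_coord_ss, eone_ss in Hpsi by lia.
  transitivity (Cmult (Cinv (Z u)) (Cmult (Z u) (psi u))); [field; now apply HZ|].
  rewrite Hpsi. ring.
Qed.

Lemma inv_coord_nil psi j : (m < j <= n)%nat -> eqA n (emul m n Ups us Z psi) (eone m) ->
  psi j = Copp (Cdiv (Cplus (Cmult (Z j) (psi (us j))) (NNpart Z psi j)) (Z (us j))).
Proof.
  intros Hj Hpsi. pose proof (HZ (us j) (Hus j Hj)) as Hu. specialize (Hpsi j ltac:(lia)).
  rewrite emul_coord_nil, eone_nil in Hpsi by lia.
  rewrite <- Cplus_assoc in Hpsi.
  apply C_solve_linear; assumption.
Qed.

Lemma einv_step_correct l : (l <= n - m)%nat -> forall j, (1 <= j <= m + l)%nat ->
  emul m n Ups us Z (fold_left (einv_step Z) (seq (S m) l) (einv_ss Z)) j = eone m j.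
Proof.
  induction l as [|l IH]; intros Hl j Hj.
  - simpl. rewrite emul_coord_ss, eone_ss by lia. unfold einv_ss. case_nat; [|lia].
    field. apply HZ; lia.
  - rewrite seq_S, fold_left_app. cbn [fold_left].
    set (psi := fold_left (einv_step Z) (seq (S m) l) (einv_ss Z)).
    destruct (Nat.eq_dec j (S m + l)) as [->|Hne].
    + pose proof (Hus (S m + l) ltac:(lia)).
      rewrite emul_coord_nil, eone_nil by lia.
      rewrite (NNpart_ext _ _ psi) by (intros; apply einv_step_other; lia).
      rewrite (einv_step_other _ _ _ (us (S m + l))) by lia.
      unfold einv_step. rewrite Nat.eqb_refl. field. apply HZ; lia.
    + rewrite (emul_coord_lower _ _ psi) by (lia || (intros; apply einv_step_other; lia)).
      apply IH; lia.
Qed.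

Lemma einv_correct : eqA n (emul m n Ups us Z (einv Z)) (eone m).
Proof. intros j Hj. apply einv_step_correct; lia. Qed.

Lemma inv_unique psi phi :
  eqA n (emul m n Ups us Z psi) (eone m) -> eqA n (emul m n Ups us Z phi) (eone m) ->
  forall j, (1 <= j <= n)%nat -> psi j = phi j.
Proof.
  intros Hpsi Hphi N. induction N as [N IH] using lt_wf_ind. intros HN.
  destruct (Nat.le_gt_cases N m).
  - rewrite (inv_coord_ss psi), (inv_coord_ss phi) by (auto; lia). reflexivity.
  - pose proof (Hus N ltac:(lia)).
    rewrite (inv_coord_nil psi), (inv_coord_nil phi) by (auto; lia).
    rewrite (IH (us N)), (NNpart_ext _ psi phi) by (lia || (intros; apply IH; lia)).
    reflexivity.
Qed.

End Inverse.


Lemma ccont_NNpart (x y : R -> Elt) j t :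
  (forall k, (1 <= k <= n)%nat -> ccont (fun s => x s k) t /\ ccont (fun s => y s k) t) ->
  ccont (fun s => NNpart (x s) (y s) j) t.
Proof.
  intros Hxy. apply ccont_csum; intros r Hr. apply ccont_csum; intros s Hs.
  destruct ((m <? r) && (r <? j) && (m <? s) && (s <? j))%bool.
  - apply ccont_mult; [apply ccont_mult; [apply Hxy | apply Hxy] | apply ccont_const]; auto.
  - apply ccont_const.
Qed.

Lemma ccont_emul (x y : R -> Elt) j t :
  (forall k, (1 <= k <= n)%nat -> ccont (fun s => x s k) t /\ ccont (fun s => y s k) t) ->
  ccont (fun s => emul m n Ups us (x s) (y s) j) t.
Proof.
  intros Hxy. apply ccont_csum; intros r Hr. apply ccont_csum; intros s Hs.
  apply ccont_mult; [apply ccont_mult; [apply Hxy | apply Hxy] | apply ccont_const]; auto.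
Qed.

Section ContinuousInverse.
Variables (Z : R -> Elt) (t : R).
Hypothesis HZc : forall k, (1 <= k <= n)%nat -> ccont (fun s => Z s k) t.
Hypothesis HZ : forall u, (1 <= u <= m)%nat -> Z t u <> RtoC 0.

Lemma ccont_fold_einv_step (l : list nat) (psi : R -> Elt) :
  (forall j, In j l -> (m < j <= n)%nat) ->
  (forall k, (1 <= k <= n)%nat -> ccont (fun s => psi s k) t) ->
  forall k, (1 <= k <= n)%nat -> ccont (fun s => fold_left (einv_step (Z s)) l (psi s) k) t.
Proof.
  revert psi. induction l as [|j l IH]; intros psi Hl Hpsi; simpl; [exact Hpsi|].
  apply IH; [intros; apply Hl; now right|].
  intros k Hk. unfold einv_step. destruct (Nat.eqb k j); [|now apply Hpsi].
  pose proof (Hl j (or_introl eq_refl)) as Hj. pose proof (Hus j Hj).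
  apply ccont_opp, ccont_div; [| apply HZc; lia | apply HZ; lia].
  apply ccont_plus; [apply ccont_mult; [apply HZc | apply Hpsi]; lia|].
  apply ccont_NNpart. intros; split; [apply HZc | apply Hpsi]; lia.
Qed.

Lemma ccont_einv k : (1 <= k <= n)%nat -> ccont (fun s => einv (Z s) k) t.
Proof.
  apply ccont_fold_einv_step.
  - intros j Hj. apply in_seq in Hj. lia.
  - intros i Hi. unfold einv_ss. destruct (Nat.leb_spec i m).
    + apply ccont_inv; [apply HZc; lia | apply HZ; lia].
    + apply ccont_const.
Qed.

End ContinuousInverse.

Lemma is_cderive_zeta a b gx gy gz t dx dy dz k :
  is_derive gx t dx -> is_derive gy t dy -> is_derive gz t dz ->
  is_cderive (fun s => zeta m a b (gx s) (gy s) (gz s) k) t (zeta m a b dx dy dz k).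
Proof.
  intros Hx Hy Hz. unfold zeta, eadd, escale.
  eapply is_cderive_val.
  - apply is_cderive_plus; [|apply is_cderive_plus];
      (apply is_cderive_mult; [apply is_cderive_RtoC; eassumption | apply is_cderive_const]).
  - simpl. ring.
Qed.

Lemma ccont_zeta a b fx fy fz t k : continuous fx t -> continuous fy t -> continuous fz t ->
  ccont (fun s => zeta m a b (fx s) (fy s) (fz s) k) t.
Proof.
  intros Hx Hy Hz. unfold zeta, eadd, escale.
  apply ccont_plus; [|apply ccont_plus];
    (apply ccont_mult; [apply ccont_RtoC | apply ccont_const]); assumption.
Qed.

Lemma lineint_CInt a b gx gy gz (Psi : R -> Elt) j : (1 <= j <= n)%nat ->
  (forall k t, (1 <= k <= n)%nat -> 0 <= t <= 2 * PI -> ccont (fun s => Psi s k) t) ->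
  C1_fun gx -> C1_fun gy -> C1_fun gz ->
  lineint m n Ups us a b gx gy gz Psi j =
  CInt (fun t => emul m n Ups us (zeta m a b (Derive gx t) (Derive gy t) (Derive gz t)) (Psi t) j)
    0 (2 * PI).
Proof.
  intros Hj HPsi Hgx Hgy Hgz. symmetry. apply is_CInt_unique.
  assert (Hc : forall k (g : R -> R), (1 <= k <= n)%nat -> C1_fun g ->
    is_CInt (fun t => Cmult (Psi t k) (RtoC (Derive g t)))
            (CInt (fun t => Cmult (Psi t k) (RtoC (Derive g t))) 0 (2 * PI))).
  { intros k g Hk Hg. apply is_CInt_CInt. intros t Ht.
    apply ccont_mult; [now apply HPsi | apply ccont_RtoC, Hg]. }
  apply (is_CInt_ext (fun t => csum 1 n (fun k =>
    Cplus (Cmult (Cmult (Psi t k) (RtoC (Derive gx t))) (basisI k j))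
      (Cplus (Cmult (Cmult (Psi t k) (RtoC (Derive gy t))) (emul m n Ups us a (basisI k) j))
             (Cmult (Cmult (Psi t k) (RtoC (Derive gz t))) (emul m n Ups us b (basisI k) j)))))).
  - intros t _. rewrite emul_expand_r. apply csum_ext; intros k Hk.
    rewrite emul_zeta_l by auto. ring.
  - apply is_CInt_csum; intros k Hk.
    apply is_CInt_plus; [|apply is_CInt_plus];
      apply is_CInt_mult_r, Hc; assumption.
Qed.

Lemma lineint_ext a b gx gy gz (Psi Phi : R -> Elt) j :
  (forall k t, (1 <= k <= n)%nat -> 0 < t < 2 * PI -> Psi t k = Phi t k) ->
  lineint m n Ups us a b gx gy gz Psi j = lineint m n Ups us a b gx gy gz Phi j.
Proof.
  intros H. unfold lineint. apply csum_ext; intros k Hk.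
  rewrite !(CInt_ext (fun t => Cmult (Psi t k) _) (fun t => Cmult (Phi t k) _))
    by (intros t Ht; now rewrite H). reflexivity.
Qed.


Section Dim4.
Hypothesis Hn : n = (m + 4)%nat.
Hypothesis Hm : (1 <= m)%nat.

Section NNpartDim4.
Variables x y : Elt.
Let c r s k := Ups (m + r)%nat (m + s)%nat (m + k)%nat.
Let x' k := x (m + k)%nat.
Let y' k := y (m + k)%nat.

Ltac NNpart_dim4 :=
  unfold NNpart, c, x', y'; rewrite Hn, csum_split_last4 by lia;
  rewrite (csum_ext 1 _ _ (fun _ => RtoC 0)) by
    (intros k Hk; apply csum_eq0; intros; eval_ltb; reflexivity);
  rewrite csum_zero, !csum_split_last4 by lia;
  repeat (rewrite (csum_ext 1 _ _ (fun _ => RtoC 0)) by (intros k Hk; eval_ltb; reflexivity);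
          rewrite csum_zero);
  eval_ltb; simpl; ring.

Lemma NNpart_dim4_1 : NNpart x y (m + 1) = RtoC 0.
Proof. NNpart_dim4. Qed.

Lemma NNpart_dim4_2 : NNpart x y (m + 2) = Cmult (Cmult (x' 1) (y' 1)) (c 1 1 2).
Proof. NNpart_dim4. Qed.

Lemma NNpart_dim4_3 : NNpart x y (m + 3) =
  Cplus (Cplus (Cmult (Cmult (x' 1) (y' 1)) (c 1 1 3)) (Cmult (Cmult (x' 1) (y' 2)) (c 1 2 3)))
        (Cplus (Cmult (Cmult (x' 2) (y' 1)) (c 2 1 3)) (Cmult (Cmult (x' 2) (y' 2)) (c 2 2 3))).
Proof. NNpart_dim4. Qed.

Lemma NNpart_dim4_4 : NNpart x y (m + 4) =
  Cplus (Cplus (Cplus (Cmult (Cmult (x' 1) (y' 1)) (c 1 1 4)) (Cmult (Cmult (x' 1) (y' 2)) (c 1 2 4)))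
               (Cmult (Cmult (x' 1) (y' 3)) (c 1 3 4)))
  (Cplus (Cplus (Cplus (Cmult (Cmult (x' 2) (y' 1)) (c 2 1 4)) (Cmult (Cmult (x' 2) (y' 2)) (c 2 2 4)))
               (Cmult (Cmult (x' 2) (y' 3)) (c 2 3 4)))
         (Cplus (Cplus (Cmult (Cmult (x' 3) (y' 1)) (c 3 1 4)) (Cmult (Cmult (x' 3) (y' 2)) (c 3 2 4)))
               (Cmult (Cmult (x' 3) (y' 3)) (c 3 3 4)))).
Proof. NNpart_dim4. Qed.

End NNpartDim4.

Section Curve.
Variables (a b : Elt) (gx gy gz : R -> R).
Hypothesis HUps : forall r s k, (m < r < k)%nat -> (m < s < k)%nat -> (k <= n)%nat ->
  Ups r s k <> RtoC 0 -> us k = us r.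
Hypothesis Hgx : C1_fun gx.
Hypothesis Hgy : C1_fun gy.
Hypothesis Hgz : C1_fun gz.
Hypothesis Hper : gx (2 * PI) = gx 0 /\ gy (2 * PI) = gy 0 /\ gz (2 * PI) = gz 0.
Hypothesis Ha1 : a (m + 1)%nat = RtoC 0.
Hypothesis Hb1 : b (m + 1)%nat = RtoC 0.
Hypothesis Hab23 : (a (m + 2)%nat = RtoC 0 /\ b (m + 2)%nat = RtoC 0) \/
                   (a (m + 3)%nat = RtoC 0 /\ b (m + 3)%nat = RtoC 0).

Let Z t := zeta m a b (gx t) (gy t) (gz t).
Let dZ t := zeta m a b (Derive gx t) (Derive gy t) (Derive gz t).
Let P t := einv (Z t).

Hypothesis HZ : forall t u, (1 <= u <= m)%nat -> Z t u <> RtoC 0.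
Hypothesis Hwind : forall u, (1 <= u <= m)%nat -> winding0 (fun t => Z t u) = RtoC 1.

Lemma is_cderive_Z t k : is_cderive (fun s => Z s k) t (dZ t k).
Proof. apply is_cderive_zeta; apply Derive_correct; [apply Hgx | apply Hgy | apply Hgz]. Qed.

Lemma ccont_dZ t k : ccont (fun s => dZ s k) t.
Proof. apply ccont_zeta; [apply Hgx | apply Hgy | apply Hgz]. Qed.

Lemma Z_periodic : Z (2 * PI) = Z 0.
Proof. unfold Z. destruct Hper as (-> & -> & ->). reflexivity. Qed.

Lemma Z_dZ_vanish j : (m < j)%nat -> a j = RtoC 0 -> b j = RtoC 0 ->
  forall t, Z t j = RtoC 0 /\ dZ t j = RtoC 0.
Proof.
  intros Hj Ha Hb t. unfold Z, dZ, zeta, eadd, escale.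
  rewrite eone_nil, Ha, Hb by exact Hj. split; ring.
Qed.

Lemma P_inverse t : eqA n (emul m n Ups us (Z t) (P t)) (eone m).
Proof. apply einv_correct. auto. Qed.

Lemma ccont_P t k : (1 <= k <= n)%nat -> ccont (fun s => P s k) t.
Proof.
  apply ccont_einv; auto. intros i _. exact (is_cderive_ccont _ _ _ (is_cderive_Z t i)).
Qed.

Lemma P_ss t u : (1 <= u <= m)%nat -> P t u = Cinv (Z t u).
Proof. intros Hu. apply (inv_coord_ss (Z t)); auto using P_inverse. Qed.

Lemma P_nil t j : (m < j <= n)%nat -> P t j =
  Copp (Cdiv (Cplus (Cmult (Z t j) (P t (us j))) (NNpart (Z t) (P t) j)) (Z t (us j))).
Proof. intros Hj. apply (inv_coord_nil (Z t)); auto using P_inverse. Qed.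

Lemma CInt_coord_ss u : (1 <= u <= m)%nat ->
  CInt (fun t => emul m n Ups us (dZ t) (P t) u) 0 (2 * PI) = Cmult (RtoC (2 * PI)) Ci.
Proof.
  intros Hu. assert (H2PIi : Cmult (RtoC (2 * PI)) Ci <> RtoC 0).
  { intro E. injection E. pose proof PI_RGT_0. lra. }
  pose proof (Hwind u Hu) as Hw. unfold winding0 in Hw.
  rewrite <- (Cdiv_eq_1 _ _ H2PIi Hw). apply CInt_ext. intros t _. rewrite emul_coord_ss, P_ss by lia.
  rewrite (Cderiv_is_cderive _ _ _ (is_cderive_Z t u)). reflexivity.
Qed.

Lemma CInt_coord_nil_exact j F : (m < j <= n)%nat ->
  (forall t, is_cderive F t (emul m n Ups us (dZ t) (P t) j)) -> F (2 * PI) = F 0 ->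
  CInt (fun t => emul m n Ups us (dZ t) (P t) j) 0 (2 * PI) = RtoC 0.
Proof.
  intros Hj HF HFper. apply (CInt_derive_periodic F); auto.
  intros t _. apply ccont_emul. intros k Hk. split; [apply ccont_dZ | now apply ccont_P].
Qed.

Ltac cderive_tac := repeat (cbv beta; match goal with
  | |- is_cderive (fun _ => ?c) _ _ => apply is_cderive_const
  | |- is_cderive (fun s => Cplus (@?f s) (@?g s)) _ _ => eapply is_cderive_plus
  | |- is_cderive (fun s => Copp (@?f s)) _ _ => eapply is_cderive_opp
  | |- is_cderive (fun s => Cdiv (@?f s) (@?g s)) _ _ => eapply is_cderive_div
  | |- is_cderive (fun s => Cmult (@?f s) (@?g s)) _ _ => eapply is_cderive_mult
  | |- is_cderive (fun s => Z s _) _ _ => apply is_cderive_Z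
  | |- Z _ _ <> RtoC 0 => apply HZ, Hus; lia
  end).

Ltac expand_P t :=
  rewrite ?(P_nil t (m + 4)) by lia; rewrite ?NNpart_dim4_4;
  rewrite ?(P_nil t (m + 3)) by lia; rewrite ?NNpart_dim4_3;
  rewrite ?(P_nil t (m + 2)) by lia; rewrite ?NNpart_dim4_2;
  rewrite ?(P_nil t (m + 1)) by lia; rewrite ?NNpart_dim4_1;
  rewrite !(P_ss t) by (apply Hus; lia).

Ltac nonzero_tac := repeat split;
  first [apply HZ, Hus; lia | let E := fresh in intro E; injection E; intros; lra].

(* [w k] is coordinate m + k of w = Z_S^-1 Z_N, where Z_S and Z_N are the semisimple and nilpotent
   parts of Z; the antiderivatives below are the coordinates of log (1 + w) = w - w^2/2 + w^3/3,
   simplified using w 1 = 0 and w 2 * w 3 = 0. *)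
Let w k t := Cdiv (Z t (m + k)%nat) (Z t (us (m + k)%nat)).

Ltac derivative_matches t :=
  eapply is_cderive_val; [unfold w; cderive_tac|];
  rewrite emul_coord_nil by lia; expand_P t;
  destruct (Z_dZ_vanish (m + 1) ltac:(lia) Ha1 Hb1 t) as [-> ->].

Ltac vanish j A B t := destruct (Z_dZ_vanish j ltac:(lia) A B t) as [-> ->].

Ltac case_Ups r s k :=
  destruct (Ceq0_dec (Ups r s k)) as [->|?];
    [| try rewrite (HUps r s k) by (assumption || lia)].

Lemma CInt_coord_nil1 :
  CInt (fun t => emul m n Ups us (dZ t) (P t) (m + 1)%nat) 0 (2 * PI) = RtoC 0.
Proof.
  apply (CInt_coord_nil_exact _ (w 1)); [lia | | unfold w; now rewrite Z_periodic].
  intros t. derivative_matches t. field. nonzero_tac.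
Qed.

Lemma CInt_coord_nil2 :
  CInt (fun t => emul m n Ups us (dZ t) (P t) (m + 2)%nat) 0 (2 * PI) = RtoC 0.
Proof.
  apply (CInt_coord_nil_exact _ (w 2)); [lia | | unfold w; now rewrite Z_periodic].
  intros t. derivative_matches t. field. nonzero_tac.
Qed.

Lemma CInt_coord_nil3 :
  CInt (fun t => emul m n Ups us (dZ t) (P t) (m + 3)%nat) 0 (2 * PI) = RtoC 0.
Proof.
  apply (CInt_coord_nil_exact _ (fun t => Cplus (w 3 t)
    (Copp (Cmult (Cdiv (Ups (m + 2) (m + 2) (m + 3)) (RtoC 2)) (Cmult (w 2 t) (w 2 t))))));
    [lia | | unfold w; now rewrite Z_periodic].
  intros t. derivative_matches t.
  destruct Hab23 as [[A B]|[A B]].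
  - vanish (m + 2)%nat A B t. field. nonzero_tac.
  - vanish (m + 3)%nat A B t. case_Ups (m + 2)%nat (m + 2)%nat (m + 3)%nat; field; nonzero_tac.
Qed.

Lemma CInt_coord_nil4 :
  CInt (fun t => emul m n Ups us (dZ t) (P t) (m + 4)%nat) 0 (2 * PI) = RtoC 0.
Proof.
  apply (CInt_coord_nil_exact _ (fun t =>
    Cplus (Cplus (Cplus (w 4 t)
      (Copp (Cmult (Cdiv (Ups (m + 2) (m + 2) (m + 4)) (RtoC 2)) (Cmult (w 2 t) (w 2 t)))))
      (Copp (Cmult (Cdiv (Ups (m + 3) (m + 3) (m + 4)) (RtoC 2)) (Cmult (w 3 t) (w 3 t)))))
      (Cmult (Cdiv (Cmult (Ups (m + 2) (m + 3) (m + 4)) (Ups (m + 2) (m + 2) (m + 3))) (RtoC 3))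
        (Cmult (Cmult (w 2 t) (w 2 t)) (w 2 t)))));
    [lia | | unfold w; now rewrite Z_periodic].
  intros t. derivative_matches t.
  destruct Hab23 as [[A B]|[A B]].
  - vanish (m + 2)%nat A B t. case_Ups (m + 3)%nat (m + 3)%nat (m + 4)%nat; field; nonzero_tac.
  - vanish (m + 3)%nat A B t.
    case_Ups (m + 2)%nat (m + 2)%nat (m + 3)%nat;
    case_Ups (m + 2)%nat (m + 2)%nat (m + 4)%nat;
    case_Ups (m + 2)%nat (m + 3)%nat (m + 4)%nat;
    field; nonzero_tac.
Qed.

Lemma lineint_inverse_zeta :
  (forall t, 0 <= t <= 2 * PI -> exists psi : Elt, eqA n (emul m n Ups us (Z t) psi) (eone m)) /\
  (forall Psi : R -> Elt,
     (forall t, 0 <= t <= 2 * PI -> eqA n (emul m n Ups us (Z t) (Psi t)) (eone m)) ->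
     eqA n (lineint m n Ups us a b gx gy gz Psi) (escale (Cmult (RtoC (2 * PI)) Ci) (eone m))).
Proof.
  split; [intros t _; exists (P t); apply P_inverse|].
  intros Psi HPsi j Hj.
  assert (HPsiP : forall k t, (1 <= k <= n)%nat -> 0 < t < 2 * PI -> Psi t k = P t k).
  { intros k t Hk Ht. apply (inv_unique (Z t)); auto using P_inverse. apply HPsi; lra. }
  rewrite (lineint_ext _ _ _ _ _ _ _ _ HPsiP), lineint_CInt by auto using ccont_P.
  unfold escale. destruct (Nat.le_gt_cases j m).
  - rewrite CInt_coord_ss, eone_ss by lia. ring.
  - rewrite eone_nil by lia. rewrite Cmult_0_r.
    assert (Hj4 : (j = m + 1 \/ j = m + 2 \/ j = m + 3 \/ j = m + 4)%nat) by lia.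
    destruct Hj4 as [Hj4|[Hj4|[Hj4|Hj4]]]; subst j;
      auto using CInt_coord_nil1, CInt_coord_nil2, CInt_coord_nil3, CInt_coord_nil4.
Qed.

End Curve.

End Dim4.

End Algebra.

Lemma is_derive_circ rad c1 c2 t :
  is_derive (circ rad c1 c2) t (rad * (- sin t * c1 + cos t * c2)).
Proof. unfold circ. auto_derive; [auto | ring]. Qed.

Lemma circ_C1 rad c1 c2 : C1_fun (circ rad c1 c2).
Proof.
  intros t. split; [eexists; apply is_derive_circ|].
  apply (continuous_ext (fun s => rad * (- sin s * c1 + cos s * c2))).
  - intros s. symmetry. apply is_derive_unique, is_derive_circ.
  - apply (ex_derive_continuous (K := R_AbsRing) (V := R_NormedModule)). auto_derive. auto.
Qed.

Lemma circ_periodic rad c1 c2 : circ rad c1 c2 (2 * PI) = circ rad c1 c2 0.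
Proof. unfold circ. now rewrite cos_2PI, sin_2PI, cos_0, sin_0. Qed.

Theorem theorem10 (m n : nat) (Ups : nat -> nat -> nat -> C) (us : nat -> nat)
  (a b : Elt) :
  is_algebra_Anm m n Ups us ->
  (* dim_C N = n - m = 4 *)
  (n - m = 4)%nat ->
  (* e1, e2, e3 linearly independent over R *)
  (forall x y z : R, eqA n (zeta m a b x y z) (fun _ => RtoC 0) ->
     x = 0 /\ y = 0 /\ z = 0) ->
  (* standing assumption: f_u(E_3) = C for every u = 1..m *)
  (forall u, (1 <= u <= m)%nat ->
     forall w : C, exists x y z : R, zeta m a b x y z u = w) ->
  (* (1) and (2) *)
  a (m + 1)%nat = RtoC 0 -> b (m + 1)%nat = RtoC 0 ->
  ((a (m + 2)%nat = RtoC 0 /\ b (m + 2)%nat = RtoC 0) \/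
   (a (m + 3)%nat = RtoC 0 /\ b (m + 3)%nat = RtoC 0)) ->
  (* every circle C as in the context *)
  forall (rad u1 u2 u3 v1 v2 v3 : R),
  0 < rad -> orthonormal u1 u2 u3 v1 v2 v3 ->
  let gx := circ rad u1 v1 in
  let gy := circ rad u2 v2 in
  let gz := circ rad u3 v3 in
  let zt := fun t => zeta m a b (gx t) (gy t) (gz t) in
  (forall u, (1 <= u <= m)%nat ->
     (* f_u(C) is a closed Jordan curve ... *)
     (forall t1 t2, 0 <= t1 < 2 * PI -> 0 <= t2 < 2 * PI ->
        zt t1 u = zt t2 u -> t1 = t2) /\
     (* ... not passing through 0, positively oriented, with 0 in its interior *)
     (forall t, zt t u <> RtoC 0) /\
     winding0 (fun t => zt t u) = RtoC 1) ->
  (* zeta^{-1} exists along C, and  int_C zeta^{-1} dzeta = 2 pi i * 1 *)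
  (forall t, 0 <= t <= 2 * PI ->
     exists psi : Elt, eqA n (emul m n Ups us (zt t) psi) (eone m)) /\
  (forall Psi : R -> Elt,
     (forall t, 0 <= t <= 2 * PI -> eqA n (emul m n Ups us (zt t) (Psi t)) (eone m)) ->
     eqA n (lineint m n Ups us a b gx gy gz Psi)
           (escale (Cmult (RtoC (2 * PI)) Ci) (eone m))).
Proof.
  intros [Hm [Hmn [Hus [_ Hassoc]]]] Hnm _ _ Ha1 Hb1 Hab23 rad u1 u2 u3 v1 v2 v3 _ _
    gx gy gz zt Hcurve.
  unfold zt, gx, gy, gz in *.
  assert (Hus' : forall j, (m < j <= n)%nat -> (1 <= us j <= m)%nat) by (intros; apply Hus; lia).
  apply (lineint_inverse_zeta m n Ups us Hmn Hus' ltac:(lia) Hm a b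
           (circ rad u1 v1) (circ rad u2 v2) (circ rad u3 v3)
           (Ups_neq0_us m n Ups us Hmn Hus' Hassoc)); auto using circ_C1.
  - now rewrite !circ_periodic.
  - intros t u Hu. apply (Hcurve u Hu).
  - intros u Hu. apply (Hcurve u Hu).
Qed.
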